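(* Let $\chi>0$, $\phi\in C^1(\mathbb{R})$ with $\phi'>0$, $\phi(0)>0$, $s>\chi\phi(0)$, $u_-\ge0$, and let $g\in C^1([0,\infty))$ be positive with exactly one $\beta>0$ such that $g'<0$ on $[0,\beta)$ and $g'>0$ on $(\beta,\infty)$; let $g_\infty:=\lim_{V\to\infty}g(V)\in(0,\infty]$. Consider equilibria $(V,0)$, $V\ge0$, of $V'=W$, $W'=-h(W)+g(V)$, $h(W)=\frac{u_-(\chi\phi(0)-s)}{\chi\phi(W)-s}$. (1) If $g_\infty<g(0)$: (i) if $u_-<g(\beta)$ or $u_->g(0)$ there is no equilibrium; (ii) if $u_-=g(\beta)$ or $g_\infty<u_-<g(0)$ there is exactly one equilibrium $E=(v,0)$, with $v\le\beta$, and $E$ is a stable focus, a stable node, or non-hyperbolic; (iii) if $g(\beta)<u_-<g_\infty$ there are exactly two equilibria $E_\pm=(v_\pm,0)$ with $0<v_+<\beta<v_-$, $u_-=g(v_\pm)$, $E_-$ a saddle and $E_+$ a stable focus or stable node. (2) If $g_\infty>g(0)$ (including $g_\infty=+\infty$): (i) if $u_-<g(\beta)$ or $u_-\ge g_\infty$ there is no equilibrium; (ii) if $u_-=g(\beta)$ or $g(0)<u_-<g_\infty$ there is exactly one equilibrium $E=(v,0)$, with $v\ge\beta$, and $E$ is a saddle or non-hyperbolic; (iii) if $g(\beta)<u_-\le g(0)$ there are exactly two equilibria $E_\pm=(v_\pm,0)$ with $0\le v_+<\beta<v_-$, $u_-=g(v_\pm)$, $E_-$ a saddle and $E_+$ a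 stable focus or stable node. (3) If $g_\infty=g(0)$: (i) if $u_-<g(\beta)$ or $u_->g(0)$ there is no equilibrium; (ii) if $u_-=g(\beta)$ there is exactly one equilibrium $E=(\beta,0)$, and it is non-hyperbolic; (iii) if $g(\beta)<u_-<g(0)$ there are exactly two equilibria $E_\pm=(v_\pm,0)$ with $0<v_+<\beta<v_-$, $u_-=g(v_\pm)$, $E_-$ a saddle and $E_+$ a stable focus or stable node. *)

From HB Require Import structures.
From mathcomp Require Import all_boot all_order all_algebra.
From mathcomp Require Import all_classical all_reals all_analysis.
From mathcomp Require Import complex.

Set Implicit Arguments.
Unset Strict Implicit.
Unset Printing Implicit Defensive.

Import Order.TTheory GRing.Theory Num.Theory.
Import numFieldNormedType.Exports.
Local Open Scope ring_scope.

Section Defs.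
Variable R : realType.

Definition hfun (chi : R) (phi : R -> R) (s um : R) (W : R) : R :=
  um * (chi * phi 0 - s) / (chi * phi W - s).

Definition vfield (chi : R) (phi : R -> R) (s um : R) (g : R -> R)
    (p : R * R) : R * R :=
  (p.2, - hfun chi phi s um p.2 + g p.1).

Definition equilibrium (chi : R) (phi : R -> R) (s um : R) (g : R -> R)
    (p : R * R) : Prop :=
  0 <= p.1 /\ vfield chi phi s um g p = (0, 0).

Definition pc (i : 'I_2) (q : R * R) : R := if i == ord0 then q.1 else q.2.

Definition jacobian (F : R * R -> R * R) (p : R * R) : 'M[R]_2 :=
  \matrix_(i < 2, j < 2)
    derive1 (fun t => pc i (F (if j == ord0 then (t, p.2) else (p.1, t)))) (pc j p).

Definition ceigen (A : 'M[R]_2) (l : R[i]) : Prop :=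
  eigenvalue (map_mx (real_complex R) A) l.

Definition non_hyperbolic (F : R * R -> R * R) (p : R * R) : Prop :=
  exists l, ceigen (jacobian F p) l /\ complex.Re l = 0.

Definition saddle (F : R * R -> R * R) (p : R * R) : Prop :=
  exists l1 l2, [/\ ceigen (jacobian F p) l1, ceigen (jacobian F p) l2,
    complex.Im l1 = 0, complex.Im l2 = 0 & complex.Re l1 < 0 < complex.Re l2].

Definition stable_node (F : R * R -> R * R) (p : R * R) : Prop :=
  forall l, ceigen (jacobian F p) l -> complex.Im l = 0 /\ complex.Re l < 0.

Definition stable_focus (F : R * R -> R * R) (p : R * R) : Prop :=
  forall l, ceigen (jacobian F p) l -> complex.Im l != 0 /\ complex.Re l < 0.

End Defs.

(* Since h(0) = u_-, the equilibria are the points (v, 0) with v >= 0 and g(v) = u_-.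
   There the Jacobian is [[0, 1], [g'(v), -h'(0)]], and h'(0) > 0 because
   chi phi(0) - s < 0, phi' > 0 and u_- = g(v) > 0.  Its determinant -g'(v) and its
   negative trace make (v, 0) a saddle on the increasing branch v > beta, a stable
   focus or node on the decreasing branch v < beta, and non-hyperbolic at the minimum
   v = beta.  On each branch g is strictly monotone, so g = u_- has at most one root
   there; by the intermediate value theorem it has one in [0, beta) iff
   g(beta) < u_- <= g(0), and one in (beta, oo) iff g(beta) < u_- < g_oo, since g
   increases strictly towards its limit g_oo.  Comparing g(0) with g_oo gives the
   three cases. *)

From Pilot Require Import Defs.
From mathcomp Require Import all_boot all_order all_algebra.
From mathcomp Require Import all_classical all_reals all_analysis.
From mathcomp Require Import complex.
From mathcomp Require Import ring lra.

Set Implicit Arguments.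
Unset Strict Implicit.
Unset Printing Implicit Defensive.

Import Order.TTheory GRing.Theory Num.Theory.
Import numFieldNormedType.Exports.
Local Open Scope ring_scope.

Lemma det_mx2 (R : comPzRingType) (A : 'M[R]_2) :
  \det A = A 0 0 * A 1 1 - A 0 1 * A 1 0.
Proof.
rewrite (expand_det_row _ 0) big_ord_recl big_ord1 /cofactor !det_mx11 !mxE /=.
rewrite expr0 expr1 mul1r mulN1r mulrN.
by congr (A _ _ * A _ _ - A _ _ * A _ _); apply/val_inj.
Qed.

Lemma trace_mx2 (R : pzSemiRingType) (A : 'M[R]_2) : \tr A = A 0 0 + A 1 1.
Proof.
by rewrite /mxtrace big_ord_recl big_ord1; congr (A _ _ + A _ _); apply/val_inj.
Qed.

Lemma eigenvalue_mx2 (F : fieldType) (A : 'M[F]_2) a :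
  eigenvalue A a = (a ^+ 2 - \tr A * a + \det A == 0).
Proof.
rewrite eigenvalue_root_char /root /char_poly det_mx2 trace_mx2 !mxE /= !hornerE.
by congr (_ == 0); rewrite det_mx2; ring.
Qed.

Lemma ceigen_ReIm (R : realType) (A : 'M[R]_2) (l : R[i]) :
  ceigen A l <->
  complex.Re l ^+ 2 - complex.Im l ^+ 2 - \tr A * complex.Re l + \det A = 0 /\
  (complex.Re l *+ 2 - \tr A) * complex.Im l = 0.
Proof.
rewrite /ceigen eigenvalue_mx2 trace_map_mx det_map_mx.
case: l => x y /=; rewrite eq_complex /=.
have -> : x * x - y * y - (\tr A * x - 0 * y) + \det A =
          x ^+ 2 - y ^+ 2 - \tr A * x + \det A by ring.
have -> : x * y + y * x - (\tr A * y + 0 * x) + 0 = (x *+ 2 - \tr A) * y by ring.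
by split => [/andP[/eqP -> /eqP ->] | [-> ->]] //; rewrite eqxx.
Qed.

Section PlanarLinearization.
Variables (R : realType) (F : R * R -> R * R) (p : R * R).
Let T := \tr (Defs.jacobian F p).
Let D := \det (Defs.jacobian F p).

Lemma saddle_of_det_lt0 : D < 0 -> saddle F p.
Proof.
move=> D_lt0; have disc_ge0 : 0 <= T ^+ 2 - 4 * D by nra.
set r := Num.sqrt (T ^+ 2 - 4 * D).
have r2 : r ^+ 2 = T ^+ 2 - 4 * D by rewrite sqr_sqrtr.
have r_ge0 : 0 <= r by rewrite sqrtr_ge0.
exists (Complex ((T - r) / 2) 0), (Complex ((T + r) / 2) 0).
split=> //=; last by apply/andP; split; nra.
all: by apply/ceigen_ReIm => /=; rewrite -/T -/D; split; [nra | lra].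
Qed.

Lemma non_hyperbolic_of_det_eq0 : D = 0 -> non_hyperbolic F p.
Proof.
move=> D0; exists (Complex 0 0); split => //.
by apply/ceigen_ReIm => /=; rewrite -/D D0; split; lra.
Qed.

Lemma stable_of_det_gt0_tr_lt0 : 0 < D -> T < 0 ->
  stable_focus F p \/ stable_node F p.
Proof.
move=> D_gt0 T_lt0.
have [disc_lt0 | disc_ge0] := ltP (T ^+ 2 - 4 * D) 0; [left | right];
  move=> [x y] /ceigen_ReIm /=; rewrite -/T -/D => -[re /eqP];
  rewrite mulf_eq0 => /orP[/eqP x_vertex | /eqP y0].
- split; last by lra.
  by apply/eqP => y0; rewrite y0 in re; nra.
- by rewrite y0 in re; have := sqr_ge0 (2 * x - T); nra.
- have y0 : y = 0 by apply/eqP; rewrite -sqrf_eq0 eq_le sqr_ge0 andbT; nra.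
  by rewrite y0 in re *; split => //; nra.
- by rewrite y0 in re *; split => //; nra.
Qed.

End PlanarLinearization.

Section LimitAtPinfty.
Variables (R : realType) (f : R -> R) (l : \bar R).
Hypothesis f_cvg : ((f x)%:E @[x --> +oo] --> l)%classic.

Lemma cvg_pinfty_gt_ex (a b : R) : (a%:E < l)%E -> exists2 x, b < x & a < f x.
Proof.
move=> a_lt_l.
have : nbhs l [set y : \bar R | (a%:E < y)%E]%classic.
  move: a_lt_l; case: l => [r||] //= a_lt_l.
  - exact: (@nbhs_open_ereal_gt _ r (fun=> a)).
  - exact: nbhs_open_ereal_pinfty.
move=> /f_cvg [M [_ HM]].
exists (Num.max M b + 1); first by rewrite ltr_pwDr // le_max lexx orbT.
by rewrite -lte_fin; apply: HM; rewrite ltr_pwDr // le_max lexx.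
Qed.

Lemma cvg_pinfty_lt_ex (a b : R) : (l < a%:E)%E -> exists2 x, b < x & f x < a.
Proof.
move=> l_lt_a.
have : nbhs l [set y : \bar R | (y < a%:E)%E]%classic.
  move: l_lt_a; case: l => [r||] //= l_lt_a.
  - exact: (@nbhs_open_ereal_lt _ r (fun=> a)).
  - exact: nbhs_open_ereal_ninfty.
move=> /f_cvg [M [_ HM]].
exists (Num.max M b + 1); first by rewrite ltr_pwDr // le_max lexx orbT.
by rewrite -lte_fin; apply: HM; rewrite ltr_pwDr // le_max lexx.
Qed.

Lemma incr_lt_cvg_pinfty (b : R) : {in `[b, +oo[ &, {homo f : x y / x < y}} ->
  forall x, b <= x -> ((f x)%:E < l)%E.
Proof.
move=> f_incr x bx; rewrite ltNge; apply/negP => l_le_fx.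
have x_in : x \in `[b, +oo[ by rewrite in_itv /= bx.
have x1_in : x + 1 \in `[b, +oo[ by rewrite in_itv /= andbT (le_trans bx) ?lerDl.
have fx_lt : f x < f (x + 1) by apply: f_incr; rewrite ?ltrDl.
have [y x1y fy_lt] : exists2 y, x + 1 < y & f y < f (x + 1).
  by apply: cvg_pinfty_lt_ex; apply: le_lt_trans l_le_fx _; rewrite lte_fin.
have y_in : y \in `[b, +oo[.
  by rewrite in_itv /= andbT (le_trans bx) // ltW // (lt_trans _ x1y) ?ltrDl.
by move: (f_incr _ _ x1_in y_in x1y); rewrite ltNge ltW.
Qed.
End LimitAtPinfty.

Section VectorField.
Variables (R : realType) (chi : R) (phi : R -> R) (s um : R) (g : R -> R).

Lemma is_derive_hfun w : derivable phi w 1 -> chi * phi w != s ->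
  is_derive w 1 (hfun chi phi s um)
    (- (um * (chi * phi 0 - s)) * (chi * derive1 phi w) / (chi * phi w - s) ^+ 2).
Proof.
move=> dphi pole; rewrite -subr_eq0 in pole.
have dq : is_derive w 1 (fun W => chi * phi W - s) (chi * derive1 phi w).
  have := is_deriveB (is_deriveZ chi (derivableP dphi)) (is_derive_cst s w 1).
  by rewrite subr0 derive1E.
have dinv := is_deriveV (f := fun W => chi * phi W - s) pole dq.
apply: is_derive_eq (is_deriveZ (um * (chi * phi 0 - s)) dinv) _.
by rewrite /GRing.scale /=; field.
Qed.

Lemma hfun0 : chi * phi 0 != s -> hfun chi phi s um 0 = um.
Proof. by move=> pole; rewrite /hfun mulfK // subr_eq0. Qed.

Lemma equilibriumE p : chi * phi 0 != s ->
  equilibrium chi phi s um g p <-> [/\ 0 <= p.1, p.2 = 0 & g p.1 = um].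
Proof.
move=> pole; case: p => v w; rewrite /equilibrium /vfield /=.
split=> [[v_ge0 [-> /eqP]] | [v_ge0 -> ->]]; last by rewrite hfun0 // addNr.
by rewrite hfun0 // addrC subr_eq0 => /eqP.
Qed.

Local Notation F := (vfield chi phi s um g).

Lemma det_jacobian_vfield v w : derivable g v 1 ->
  \det (Defs.jacobian F (v, w)) = - derive1 g v.
Proof.
move=> dg; rewrite det_mx2 !mxE /pc /= derive1_cst derive1_id mul0r mul1r sub0r.
have := is_deriveD (is_derive_cst (- hfun chi phi s um w) v 1) (derivableP dg).
by move=> ?; rewrite derive1E derive_val add0r derive1E.
Qed.

Lemma trace_jacobian_vfield v w : derivable (hfun chi phi s um) w 1 ->
  \tr (Defs.jacobian F (v, w)) = - derive1 (hfun chi phi s um) w.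
Proof.
move=> dh; rewrite trace_mx2 !mxE /pc /= derive1_cst add0r.
have := is_deriveD (is_deriveN (derivableP dh)) (is_derive_cst (g v) w 1).
by move=> ?; rewrite derive1E derive_val addr0 derive1E.
Qed.

End VectorField.

Section UShaped.
Variables (R : realType) (g : R -> R) (beta : R).
Hypothesis g_derivable : forall x : R, 0 <= x -> derivable g x 1.
Hypothesis beta_gt0 : 0 < beta.
Hypothesis g'_lt0 : forall x : R, 0 <= x < beta -> derive1 g x < 0.
Hypothesis g'_gt0 : forall x : R, beta < x -> 0 < derive1 g x.

Lemma continuous_within_g (a b : R) : 0 <= a -> {within `[a, b], continuous g}%classic.
Proof.
move=> a_ge0; apply: continuous_subspace_itv => x; rewrite in_itv /= => /andP[ax _].
exact/differentiable_continuous/derivable1_diffP/g_derivable/(le_trans a_ge0).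
Qed.

Lemma g_decr : {in `[0, beta] &, {homo g : x y /~ x < y}}.
Proof.
apply: ltr0_derive1_lt_cc; last exact: continuous_within_g.
- by move=> x; rewrite in_itv /= => /andP[x_gt0 _]; apply/g_derivable/ltW.
- by move=> x; rewrite in_itv /= => /andP[x_gt0 x_lt]; apply: g'_lt0; rewrite ltW.
Qed.

Lemma g_incr : {in `[beta, +oo[ &, {homo g : x y / x < y}}.
Proof.
move=> x y; rewrite !in_itv /= !andbT => bx _ xy.
apply: (@gtr0_derive1_lt_cc _ _ beta y);
  rewrite ?in_itv /= ?bx ?lexx ?(ltW xy) ?(le_trans bx (ltW xy)) //.
- by move=> t; rewrite in_itv /= => /andP[bt _]; apply/g_derivable/ltW/(lt_trans beta_gt0).
- by move=> t; rewrite in_itv /= => /andP[bt _]; apply: g'_gt0.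
- exact/continuous_within_g/ltW.
Qed.

Lemma g_ge_beta x : 0 <= x -> g beta <= g x.
Proof.
move=> x_ge0; have [xb|bx] := leP x beta.
  have [->//|x_lt] := eqVneq x beta.
  by apply/ltW/g_decr; rewrite ?in_itv /= ?x_ge0 ?xb ?lexx ?(ltW beta_gt0) // lt_neqAle x_lt.
by apply/ltW/g_incr; rewrite ?in_itv /= ?lexx ?(ltW bx).
Qed.

Lemma g_le_g0 x : 0 <= x <= beta -> g x <= g 0.
Proof.
move=> /andP[x_ge0 xb]; have [<-//|x_neq0] := eqVneq 0 x.
by apply/ltW/g_decr; rewrite ?in_itv /= ?lexx ?x_ge0 ?xb ?(ltW beta_gt0) // lt_neqAle x_neq0.
Qed.

Lemma derive1_g_beta : derive1 g beta = 0.
Proof.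
have : is_derive beta 1 g 0.
  apply: (@derive1_at_min _ g 0 (beta *+ 2)).
  - by rewrite mulrn_wge0 // ltW.
  - by move=> t; rewrite in_itv /= => /andP[t_gt0 _]; apply/g_derivable/ltW.
  - by rewrite in_itv /= beta_gt0 mulr2n ltrDl.
  - by move=> t; rewrite in_itv /= => /andP[t_gt0 _]; apply/g_ge_beta/ltW.
by move=> ?; rewrite derive1E derive_val.
Qed.

Lemma g_inj_left : {in `[0, beta] &, injective g}.
Proof. exact/dec_inj_in/le_nmono_in/g_decr. Qed.

Lemma g_inj_right : {in `[beta, +oo[ &, injective g}.
Proof. exact/inc_inj_in/le_mono_in/g_incr. Qed.

Lemma g_root_left a : g beta < a <= g 0 -> exists2 v, 0 <= v < beta & g v = a.
Proof.
move=> /andP[ga ag0].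
have [|v] := @IVT R g 0 beta a (ltW beta_gt0) (continuous_within_g (b := beta) (lexx 0)).
  by rewrite ge_min le_max (ltW ga) ag0 orbT.
rewrite in_itv /= => /andP[v_ge0 vb] gv; exists v => //.
by rewrite v_ge0 lt_neqAle vb andbT; apply: contraTneq ga => <-; rewrite gv ltxx.
Qed.

Lemma g_eq_beta x : 0 <= x -> g x = g beta -> x = beta.
Proof.
move=> x_ge0 gx; have [xb|bx] := leP x beta.
  by apply: g_inj_left; rewrite // !in_itv /= ?x_ge0 ?xb ?lexx ?(ltW beta_gt0).
by apply: g_inj_right; rewrite // !in_itv /= ?lexx ?(ltW bx).
Qed.

Variable ginf : \bar R.
Hypothesis g_cvg : ((g x)%:E @[x --> +oo] --> ginf)%classic.

Lemma g_lt_ginf x : beta <= x -> ((g x)%:E < ginf)%E.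
Proof. exact: (incr_lt_cvg_pinfty g_cvg g_incr). Qed.

Lemma g_root_right a : g beta < a -> (a%:E < ginf)%E -> exists2 v, beta < v & g v = a.
Proof.
move=> ga /(cvg_pinfty_gt_ex g_cvg beta) [x bx ax].
have [|v] := @IVT R g beta x a (ltW bx) (continuous_within_g (b := x) (ltW beta_gt0)).
  by rewrite ge_min le_max (ltW ga) (ltW ax) orbT.
rewrite in_itv /= => /andP[bv _] gv; exists v => //.
by rewrite lt_neqAle bv andbT; apply: contraTneq ga => ->; rewrite gv ltxx.
Qed.

Section Equilibria.
Variables (chi : R) (phi : R -> R) (s um : R).
Hypothesis chi_gt0 : 0 < chi.
Hypothesis phi_derivable : forall x : R, derivable phi x 1.
Hypothesis phi'_gt0 : forall x : R, 0 < derive1 phi x.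
Hypothesis s_gt : chi * phi 0 < s.
Hypothesis g_gt0 : forall x : R, 0 <= x -> 0 < g x.

Local Notation F := (vfield chi phi s um g).
Local Notation equilibrium := (equilibrium chi phi s um g).

Let pole0 : chi * phi 0 != s. Proof. by rewrite lt_eqF. Qed.

Let equilibriumP p : equilibrium p <-> [/\ 0 <= p.1, p.2 = 0 & g p.1 = um].
Proof. exact: equilibriumE. Qed.

Lemma derive1_hfun0_gt0 : 0 < um -> 0 < derive1 (hfun chi phi s um) 0.
Proof.
move=> um_gt0; have dh := is_derive_hfun um (@phi_derivable 0) pole0.
rewrite derive1E derive_val.
have c0_lt0 : chi * phi 0 - s < 0 by rewrite subr_lt0.
have num_gt0 : 0 < - (um * (chi * phi 0 - s)) by nra.
apply: divr_gt0; first by rewrite mulr_gt0 ?mulr_gt0.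
by rewrite exprn_even_gt0 //= lt_eqF.
Qed.

Lemma saddle_vfield v : beta < v -> saddle F (v, 0).
Proof.
move=> bv; apply: saddle_of_det_lt0.
rewrite det_jacobian_vfield ?oppr_lt0 ?g'_gt0 //.
exact/g_derivable/ltW/(lt_trans beta_gt0).
Qed.

Lemma non_hyperbolic_vfield_beta : non_hyperbolic F (beta, 0).
Proof.
apply: non_hyperbolic_of_det_eq0.
by rewrite det_jacobian_vfield ?derive1_g_beta ?oppr0 //; apply/g_derivable/ltW.
Qed.

Lemma stable_vfield v : 0 <= v < beta -> g v = um ->
  stable_focus F (v, 0) \/ stable_node F (v, 0).
Proof.
move=> /andP[v_ge0 vb] gv; apply: stable_of_det_gt0_tr_lt0.
  rewrite det_jacobian_vfield; last exact: g_derivable.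
  by rewrite oppr_gt0 g'_lt0 // v_ge0 vb.
have dh := is_derive_hfun um (@phi_derivable 0) pole0.
rewrite trace_jacobian_vfield; last by case: dh.
by rewrite oppr_lt0 derive1_hfun0_gt0 // -gv g_gt0.
Qed.

Lemma no_equilibrium :
  um < g beta \/ g 0 < um /\ (ginf <= um%:E)%E -> forall p, ~ equilibrium p.
Proof.
move=> um_out [v w] /equilibriumP /= [v_ge0 _ gv]; move: um_out; rewrite -gv.
case=> [|[g0_lt ginf_le]]; first by rewrite ltNge g_ge_beta.
have [vb|bv] := leP v beta; first by move: g0_lt; rewrite ltNge g_le_g0 ?v_ge0.
by move: ginf_le; rewrite leNgt g_lt_ginf // ltW.
Qed.

Lemma equilibrium_beta : um = g beta ->
  (forall p, equilibrium p <-> p = (beta, 0)) /\ non_hyperbolic F (beta, 0).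
Proof.
move=> um_beta; split=> [[v w]|]; last exact: non_hyperbolic_vfield_beta.
split=> [/equilibriumP /= [v_ge0 -> gv] | [-> ->]].
  by rewrite (g_eq_beta v_ge0) // gv.
by apply/equilibriumP; rewrite /= ltW.
Qed.

Lemma unique_equilibrium_left : g beta < um <= g 0 -> (ginf <= um%:E)%E ->
  exists v, [/\ forall p, equilibrium p <-> p = (v, 0), 0 <= v < beta &
                stable_focus F (v, 0) \/ stable_node F (v, 0)].
Proof.
move=> um_in ginf_le; have [v v_in gv] := g_root_left um_in.
have /andP[v_ge0 vb] := v_in.
exists v; split=> //; last exact: stable_vfield.
move=> [x w]; split=> [/equilibriumP /= [x_ge0 -> gx] | [-> ->]]; last first.
  exact/equilibriumP.
have [xb|bx] := leP x beta; last by move: ginf_le; rewrite leNgt -gx g_lt_ginf // ltW.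
by congr pair; apply: g_inj_left; rewrite ?gx // !in_itv /= ?x_ge0 ?xb ?v_ge0 ?ltW.
Qed.

Lemma unique_equilibrium_right : g 0 < um -> (um%:E < ginf)%E ->
  exists v, [/\ forall p, equilibrium p <-> p = (v, 0), beta < v & saddle F (v, 0)].
Proof.
move=> g0_lt um_lt.
have [v bv gv] := g_root_right (le_lt_trans (g_ge_beta (lexx 0)) g0_lt) um_lt.
exists v; split=> //; last exact: saddle_vfield.
move=> [x w]; split=> [/equilibriumP /= [x_ge0 -> gx] | [-> ->]]; last first.
  by apply/equilibriumP; rewrite /= ltW // (lt_trans beta_gt0).
have [xb|bx] := leP x beta; first by move: g0_lt; rewrite -gx ltNge g_le_g0 // x_ge0 xb.
by congr pair; apply: g_inj_right; rewrite ?gx // !in_itv /= ?ltW.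
Qed.

Lemma two_equilibria : g beta < um <= g 0 -> (um%:E < ginf)%E ->
  exists vp vm : R,
    [/\ forall p, equilibrium p <-> p = (vp, 0) \/ p = (vm, 0),
        0 <= vp < beta /\ beta < vm,
        um = g vp /\ um = g vm,
        saddle F (vm, 0) &
        stable_focus F (vp, 0) \/ stable_node F (vp, 0)].
Proof.
move=> um_in um_lt; have /andP[gb_lt _] := um_in.
have [vp vp_in gvp] := g_root_left um_in; have /andP[vp_ge0 vpb] := vp_in.
have [vm bvm gvm] := g_root_right gb_lt um_lt.
exists vp, vm; split=> //; [|exact: saddle_vfield|exact: stable_vfield].
move=> [x w]; split=> [/equilibriumP /= [x_ge0 -> gx] | ]; last first.
  by case=> -[-> ->]; apply/equilibriumP; split=> //=; rewrite ltW // (lt_trans beta_gt0).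
have [xb|bx] := leP x beta; [left | right]; congr pair.
  by apply: g_inj_left; rewrite ?gx // !in_itv /= ?x_ge0 ?xb ?vp_ge0 ?ltW.
by apply: g_inj_right; rewrite ?gx // !in_itv /= ?ltW.
Qed.

Lemma two_equilibria_pos : g beta < um < g 0 -> (um%:E < ginf)%E ->
  exists vp vm : R,
    [/\ forall p, equilibrium p <-> p = (vp, 0) \/ p = (vm, 0),
        0 < vp < beta /\ beta < vm,
        um = g vp /\ um = g vm,
        saddle F (vm, 0) &
        stable_focus F (vp, 0) \/ stable_node F (vp, 0)].
Proof.
move=> /andP[gb_lt um_lt_g0] um_lt.
have [|vp [vm [eqs [/andP[vp_ge0 vpb] bvm] [gvp gvm] sad st]]] := two_equilibria _ um_lt.
  by rewrite gb_lt ltW.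
exists vp, vm; split=> //; rewrite bvm vpb !andbT lt_neqAle vp_ge0 andbT; split=> //.
by apply: contraTneq um_lt_g0 => ->; rewrite -gvp ltxx.
Qed.

Lemma equilibria_ginf_lt_g0 : (ginf < (g 0)%:E)%E ->
  [/\ (um < g beta \/ g 0 < um) -> forall p, ~ equilibrium p,
      (um = g beta \/ ((ginf < um%:E)%E /\ um < g 0)) ->
        exists v : R,
          [/\ forall p, equilibrium p <-> p = (v, 0),
              v <= beta &
              [\/ stable_focus F (v, 0), stable_node F (v, 0) | non_hyperbolic F (v, 0)]]
    & (g beta < um /\ (um%:E < ginf)%E) ->
        exists vp vm : R,
          [/\ forall p, equilibrium p <-> p = (vp, 0) \/ p = (vm, 0),
              0 < vp < beta /\ beta < vm,
              um = g vp /\ um = g vm,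
              saddle F (vm, 0) &
              stable_focus F (vp, 0) \/ stable_node F (vp, 0)]].
Proof.
move=> ginf_lt; have gb_ginf := g_lt_ginf (lexx beta); split.
- case=> [um_lt | g0_lt]; apply: no_equilibrium; [by left | right].
  by rewrite g0_lt (le_trans (ltW ginf_lt)) // lee_fin ltW.
- case=> [um_beta | [ginf_lt_um um_lt]].
    have [eqs nh] := equilibrium_beta um_beta.
    by exists beta; split=> //; apply: Or33.
  have um_in : g beta < um <= g 0 by rewrite ltW // andbT -lte_fin (lt_trans gb_ginf).
  have [v [eqs /andP[_ vb] st]] := unique_equilibrium_left um_in (ltW ginf_lt_um).
  by exists v; split=> //; [rewrite ltW | case: st => ?; [apply: Or31 | apply: Or32]].
- case=> gb_lt um_lt; apply: two_equilibria_pos => //.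
  by rewrite gb_lt -lte_fin (lt_trans um_lt).
Qed.

Lemma equilibria_g0_lt_ginf : ((g 0)%:E < ginf)%E ->
  [/\ (um < g beta \/ (ginf <= um%:E)%E) -> forall p, ~ equilibrium p,
      (um = g beta \/ (g 0 < um /\ (um%:E < ginf)%E)) ->
        exists v : R,
          [/\ forall p, equilibrium p <-> p = (v, 0),
              beta <= v &
              saddle F (v, 0) \/ non_hyperbolic F (v, 0)]
    & (g beta < um <= g 0) ->
        exists vp vm : R,
          [/\ forall p, equilibrium p <-> p = (vp, 0) \/ p = (vm, 0),
              0 <= vp < beta /\ beta < vm,
              um = g vp /\ um = g vm,
              saddle F (vm, 0) &
              stable_focus F (vp, 0) \/ stable_node F (vp, 0)]].
Proof.
move=> g0_lt; split.
- case=> [um_lt | ginf_le]; apply: no_equilibrium; [by left | right].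
  by rewrite -lte_fin (lt_le_trans g0_lt ginf_le).
- case=> [um_beta | [g0_lt_um um_lt]].
    have [eqs nh] := equilibrium_beta um_beta.
    by exists beta; split=> //; right.
  have [v [eqs bv sad]] := unique_equilibrium_right g0_lt_um um_lt.
  by exists v; split=> //; [rewrite ltW | left].
- move=> um_in; apply: two_equilibria => //.
  by rewrite (le_lt_trans _ g0_lt) // lee_fin; case/andP: um_in.
Qed.

Lemma equilibria_ginf_eq_g0 : ginf = (g 0)%:E ->
  [/\ (um < g beta \/ g 0 < um) -> forall p, ~ equilibrium p,
      um = g beta ->
        (forall p, equilibrium p <-> p = (beta, 0)) /\ non_hyperbolic F (beta, 0)
    & (g beta < um < g 0) ->
        exists vp vm : R,
          [/\ forall p, equilibrium p <-> p = (vp, 0) \/ p = (vm, 0),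
              0 < vp < beta /\ beta < vm,
              um = g vp /\ um = g vm,
              saddle F (vm, 0) &
              stable_focus F (vp, 0) \/ stable_node F (vp, 0)]].
Proof.
move=> ginf_eq; split; last 2 first.
- exact: equilibrium_beta.
- move=> um_in; apply: two_equilibria_pos => //.
  by rewrite ginf_eq lte_fin; case/andP: um_in.
case=> [um_lt | g0_lt]; apply: no_equilibrium; [by left | right].
by rewrite g0_lt ginf_eq lee_fin ltW.
Qed.

End Equilibria.

End UShaped.

Local Open Scope classical_set_scope.

Theorem proposition2p6 (R : realType) (chi : R) (phi : R -> R) (s um : R)
  (g : R -> R) (beta : R) (ginf : \bar R)
  (hchi : 0 < chi)
  (hphi_d : forall x : R, derivable phi x 1)
  (hphi_c : continuous (derive1 phi))
  (hphi' : forall x : R, 0 < derive1 phi x)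
  (hphi0 : 0 < phi 0)
  (hs : chi * phi 0 < s)
  (hum : 0 <= um)
  (hg_d : forall x : R, 0 <= x -> derivable g x 1)
  (hg_c : {within [set x : R | 0 <= x], continuous (derive1 g)})
  (hg_pos : forall x : R, 0 <= x -> 0 < g x)
  (hbeta : 0 < beta)
  (hg_dec : forall x : R, 0 <= x < beta -> derive1 g x < 0)
  (hg_inc : forall x : R, beta < x -> 0 < derive1 g x)
  (hginf : (g x)%:E @[x --> +oo] --> ginf) :
  [/\
  (* (1) g_oo < g(0) *)
  (ginf < (g 0)%:E)%E ->
  [/\ (um < g beta \/ g 0 < um) ->
        forall p, ~ equilibrium chi phi s um g p,
      (um = g beta \/ ((ginf < um%:E)%E /\ um < g 0)) ->
        exists v : R,
          [/\ forall p, equilibrium chi phi s um g p <-> p = (v, 0),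
              v <= beta &
              [\/ stable_focus (vfield chi phi s um g) (v, 0),
                  stable_node (vfield chi phi s um g) (v, 0) |
                  non_hyperbolic (vfield chi phi s um g) (v, 0)]]
    & (g beta < um /\ (um%:E < ginf)%E) ->
        exists vp vm : R,
          [/\ forall p, equilibrium chi phi s um g p <-> p = (vp, 0) \/ p = (vm, 0),
              0 < vp < beta /\ beta < vm,
              um = g vp /\ um = g vm,
              saddle (vfield chi phi s um g) (vm, 0) &
              stable_focus (vfield chi phi s um g) (vp, 0) \/
              stable_node (vfield chi phi s um g) (vp, 0)]],
  (* (2) g_oo > g(0), possibly g_oo = +oo *)
  ((g 0)%:E < ginf)%E ->
  [/\ (um < g beta \/ (ginf <= um%:E)%E) ->
        forall p, ~ equilibrium chi phi s um g p,
      (um = g beta \/ (g 0 < um /\ (um%:E < ginf)%E)) ->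
        exists v : R,
          [/\ forall p, equilibrium chi phi s um g p <-> p = (v, 0),
              beta <= v &
              saddle (vfield chi phi s um g) (v, 0) \/
              non_hyperbolic (vfield chi phi s um g) (v, 0)]
    & (g beta < um <= g 0) ->
        exists vp vm : R,
          [/\ forall p, equilibrium chi phi s um g p <-> p = (vp, 0) \/ p = (vm, 0),
              0 <= vp < beta /\ beta < vm,
              um = g vp /\ um = g vm,
              saddle (vfield chi phi s um g) (vm, 0) &
              stable_focus (vfield chi phi s um g) (vp, 0) \/
              stable_node (vfield chi phi s um g) (vp, 0)]] &
  (* (3) g_oo = g(0) *)
  ginf = (g 0)%:E ->
  [/\ (um < g beta \/ g 0 < um) ->
        forall p, ~ equilibrium chi phi s um g p,
      um = g beta ->
        (forall p, equilibrium chi phi s um g p <-> p = (beta, 0)) /\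
        non_hyperbolic (vfield chi phi s um g) (beta, 0)
    & (g beta < um < g 0) ->
        exists vp vm : R,
          [/\ forall p, equilibrium chi phi s um g p <-> p = (vp, 0) \/ p = (vm, 0),
              0 < vp < beta /\ beta < vm,
              um = g vp /\ um = g vm,
              saddle (vfield chi phi s um g) (vm, 0) &
              stable_focus (vfield chi phi s um g) (vp, 0) \/
              stable_node (vfield chi phi s um g) (vp, 0)]]].
Proof.
by split; [apply: equilibria_ginf_lt_g0 | apply: equilibria_g0_lt_ginf
          | apply: equilibria_ginf_eq_g0].
Qed.
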